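(* Let ${}^*\mathbb{Z}=\mathbb{Z}^I/\mathcal{U}$ be an ultrapower of $\mathbb{Z}$ with respect to a nonprincipal ultrafilter $\mathcal{U}$ on a countably infinite set $I$. The map $\mathfrak{m}\mapsto\mathcal{F}(\mathfrak{m})$ is a one-to-one correspondence between the maximal ideals of ${}^*\mathbb{Z}$ and the maximal filters on $\operatorname{pr}({}^*\mathbb{Z})$. Moreover, for a maximal ideal $\mathfrak{m}$, $\mathcal{F}(\mathfrak{m})$ is principal if and only if $\mathfrak{m}=p\,{}^*\mathbb{Z}$ for some $p\in\mathcal{P}({}^*\mathbb{N})$.
   Context: ${}^*\mathbb{N}=\mathbb{N}^I/\mathcal{U}$. For $x,y\in{}^*\mathbb{Z}$, $x\mid y$ means $y=zx$ for some $z\in{}^*\mathbb{Z}$. $\mathcal{P}({}^*\mathbb{N})$ is the set of $p\in{}^*\mathbb{N}$, $p\neq1$, whose only divisors in ${}^*\mathbb{Z}$ are $\pm1,\pm p$. For $n\in{}^*\mathbb{Z}$, $\operatorname{pr}(n)=\{p\in\mathcal{P}({}^*\mathbb{N}):p\mid n\}$ and $\operatorname{pr}({}^*\mathbb{Z})=\{\operatorname{pr}(n):n\in{}^*\mathbb{Z}\}$. A filter on $\operatorname{pr}({}^*\mathbb{Z})$ is $\mathcal{F}\subseteq\operatorname{pr}({}^*\mathbb{Z})$ with (a) $\emptyset\notin\mathcal{F}$; (b) closed under intersections of two members; (c) if $\operatorname{pr}(n)\in\mathcal{F}$ and $\operatorname{pr}(n)\subseteq\operatorname{pr}(m)$ then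 $\operatorname{pr}(m)\in\mathcal{F}$. It is maximal if no filter properly contains it, and principal if there is $n\in{}^*\mathbb{Z}$ such that for $S\in\operatorname{pr}({}^*\mathbb{Z})$, $S\in\mathcal{F}$ iff $\operatorname{pr}(n)\subseteq S$. For an ideal $J$, $\mathcal{F}(J)=\{\operatorname{pr}(n):n\in J\}$. *)

(* the ultrapower *Z = Z^I/U built as a genuine quotient type
   (equivalence classes), with ring operations defined on representatives. *)
From Stdlib Require Import ZArith ClassicalEpsilon.
Open Scope Z_scope.

Definition ultrafilter {I : Type} (U : (I -> Prop) -> Prop) : Prop :=
  ~ U (fun _ => False) /\
  U (fun _ => True) /\
  (forall A B : I -> Prop, U A -> (forall i, A i -> B i) -> U B) /\
  (forall A B : I -> Prop, U A -> U B -> U (fun i => A i /\ B i)) /\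
  (forall A : I -> Prop, U A \/ U (fun i => ~ A i)).

Definition nonprincipal {I : Type} (U : (I -> Prop) -> Prop) : Prop :=
  forall i : I, ~ U (fun j => j = i).

Definition countably_infinite (I : Type) : Prop :=
  exists f : nat -> I, (forall a b, f a = f b -> a = b) /\ (forall y, exists x, f x = y).

Section Ultrapower.
Context {I : Type} (U : (I -> Prop) -> Prop).

Definition eqU (f g : I -> Z) : Prop := U (fun i => f i = g i).
Definition cls (f : I -> Z) : (I -> Z) -> Prop := fun g => eqU f g.

Definition starZ : Type := {S : (I -> Z) -> Prop | exists f, S = cls f}.

Definition mk (f : I -> Z) : starZ := exist _ (cls f) (ex_intro _ f eq_refl).
Definition rep (x : starZ) : I -> Z :=
  proj1_sig (constructive_indefinite_description _ (proj2_sig x)).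

Definition szero : starZ := mk (fun _ => 0).
Definition sone : starZ := mk (fun _ => 1).
Definition sadd (x y : starZ) : starZ := mk (fun i => rep x i + rep y i).
Definition smul (x y : starZ) : starZ := mk (fun i => rep x i * rep y i).
Definition sopp (x : starZ) : starZ := mk (fun i => - rep x i).

Definition inStarN (x : starZ) : Prop := U (fun i => 0 <= rep x i).

Definition sdvd (x y : starZ) : Prop := exists z, y = smul z x.

Definition sprime (p : starZ) : Prop :=
  inStarN p /\ p <> sone /\
  forall d, sdvd d p -> d = sone \/ d = sopp sone \/ d = p \/ d = sopp p.

Definition pr (n : starZ) : starZ -> Prop := fun p => sprime p /\ sdvd p n.
Definition in_prZ (S : starZ -> Prop) : Prop := exists n, S = pr n.

Definition subset (S T : starZ -> Prop) : Prop := forall x, S x -> T x.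

Definition is_filter (F : (starZ -> Prop) -> Prop) : Prop :=
  (forall S, F S -> in_prZ S) /\
  ~ F (fun _ => False) /\
  (forall S T, F S -> F T -> F (fun x => S x /\ T x)) /\
  (forall n m, F (pr n) -> subset (pr n) (pr m) -> F (pr m)).

Definition maximal_filter (F : (starZ -> Prop) -> Prop) : Prop :=
  is_filter F /\
  ~ exists G, is_filter G /\ (forall S, F S -> G S) /\ G <> F.

Definition principal_filter (F : (starZ -> Prop) -> Prop) : Prop :=
  exists n, forall S, in_prZ S -> (F S <-> subset (pr n) S).

Definition is_ideal (J : starZ -> Prop) : Prop :=
  J szero /\
  (forall x y, J x -> J y -> J (sadd x y)) /\
  (forall r x, J x -> J (smul r x)).

Definition maximal_ideal (J : starZ -> Prop) : Prop :=
  is_ideal J /\ ~ J sone /\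
  forall K, is_ideal K -> subset J K -> K = J \/ K sone.

Definition pZ (p : starZ) : starZ -> Prop := fun x => exists z, x = smul p z.

Definition Fof (J : starZ -> Prop) : (starZ -> Prop) -> Prop :=
  fun S => exists n, J n /\ S = pr n.

End Ultrapower.

From Stdlib Require Import ZArith Znumtheory Lia ClassicalEpsilon Classical
  FunctionalExtensionality PropExtensionality ProofIrrelevance.
Open Scope Z_scope.

(* Coordinatewise gcds and Bezout coefficients make *Z a Bezout domain, and a
   nonunit of *Z has a prime divisor in P( *N ) (choose one in each coordinate).
   Hence pr(a) and pr(b) meet in pr(gcd(a, b)), pr(n) is empty exactly for units,
   and for a maximal ideal m and k outside m some a in m has pr(a) disjoint from
   pr(k). So n in m and pr(n) contained in pr(k) force k in m: F(m) is a filter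
   from which m is recovered, and a strictly larger filter would contain the empty
   set. Conversely a maximal filter F yields the maximal ideal {n | pr(n) in F}. *)

Lemma pred_ext {A : Type} (P Q : A -> Prop) : (forall x, P x <-> Q x) -> P = Q.
Proof. intros H. extensionality x. apply propositional_extensionality, H. Qed.

Lemma Z_exists_prime_divisor_ge2 n : 2 <= n -> exists p, prime p /\ (p | n).
Proof.
  intros Hn. assert (Hn0 : 0 <= n) by lia. revert Hn.
  pattern n. apply Z_lt_induction; [|exact Hn0].
  intros x IH H2. destruct (prime_dec x) as [Hp|Hp].
  - exists x. split; [exact Hp | apply Z.divide_refl].
  - destruct (not_prime_divide x ltac:(lia) Hp) as [m [Hm Hd]].
    destruct (IH m ltac:(lia) ltac:(lia)) as [p [Hp' Hpd]].
    exists p. split; [exact Hp'|]. eapply Z.divide_trans; eauto.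
Qed.

Lemma Z_exists_prime_divisor z : ~ (z | 1) -> exists p, prime p /\ (p | z).
Proof.
  intros Hz. destruct (Z.eq_dec z 0) as [->|Hz0].
  - exists 2. split; [exact prime_2 | apply Z.divide_0_r].
  - assert (Ha : 2 <= Z.abs z).
    { destruct (Z.eq_dec (Z.abs z) 1) as [E|E]; [|lia].
      exfalso; apply Hz. apply Z.divide_abs_l. rewrite E. apply Z.divide_refl. }
    destruct (Z_exists_prime_divisor_ge2 (Z.abs z) Ha) as [p [Hp Hd]].
    exists p. split; [exact Hp|]. apply Z.divide_abs_r, Hd.
Qed.
Section Ultrapower.
Variable I : Type.
Variable U : (I -> Prop) -> Prop.
Hypothesis hU : ultrafilter U.

Lemma U_mono (A B : I -> Prop) : U A -> (forall i, A i -> B i) -> U B.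
Proof. destruct hU as [_ [_ [H _]]]. eauto. Qed.

Lemma U_and (A B : I -> Prop) : U A -> U B -> U (fun i => A i /\ B i).
Proof. destruct hU as [_ [_ [_ [H _]]]]. eauto. Qed.

Lemma U_mono2 (A B C : I -> Prop) :
  U A -> U B -> (forall i, A i -> B i -> C i) -> U C.
Proof. intros HA HB H. apply (U_mono _ _ (U_and _ _ HA HB)). intros i []; auto. Qed.

Lemma U_all (A : I -> Prop) : (forall i, A i) -> U A.
Proof. intros H. destruct hU as [_ [T _]]. apply (U_mono _ _ T). auto. Qed.

Lemma U_nonempty (A : I -> Prop) : U A -> exists i, A i.
Proof.
  intros H. destruct hU as [F _]. apply NNPP. intros Hno. apply F.
  apply (U_mono _ _ H). intros i Hi. apply Hno. exists i; exact Hi.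
Qed.

Lemma U_or (A B : I -> Prop) : U (fun i => A i \/ B i) -> U A \/ U B.
Proof.
  intros H. destruct hU as [_ [_ [_ [_ D]]]]. destruct (D A) as [HA|HA]; [auto|].
  right. apply (U_mono2 _ _ _ H HA). tauto.
Qed.

Lemma U_compl (A : I -> Prop) : ~ U A -> U (fun i => ~ A i).
Proof. intros H. destruct hU as [_ [_ [_ [_ D]]]]. destruct (D A); tauto. Qed.

Lemma starZ_ext (x y : starZ U) : proj1_sig x = proj1_sig y -> x = y.
Proof.
  destruct x as [S p], y as [T q]; simpl; intros ->. f_equal. apply proof_irrelevance.
Qed.

Lemma mk_eq f g : mk U f = mk U g <-> eqU U f g.
Proof.
  split.
  - intros H. apply (f_equal (@proj1_sig _ _)) in H. simpl in H.
    assert (E : cls U f g = cls U g g) by (rewrite H; reflexivity).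
    unfold cls in E. rewrite E. apply U_all. auto.
  - intros H. apply starZ_ext, pred_ext. intros h. unfold cls, eqU in *.
    split; intros H'; apply (U_mono2 _ _ _ H H'); congruence.
Qed.

Lemma mk_surj (x : starZ U) : exists f, x = mk U f.
Proof. destruct x as [S [f ->]]. exists f. apply starZ_ext. reflexivity. Qed.

Lemma rep_mk f : U (fun i => rep U (mk U f) i = f i).
Proof.
  assert (H : mk U (rep U (mk U f)) = mk U f).
  { unfold rep. destruct (constructive_indefinite_description _ _) as [g Hg].
    apply starZ_ext. symmetry. exact Hg. }
  apply mk_eq in H. exact H.
Qed.

Lemma sadd_mk f g : sadd U (mk U f) (mk U g) = mk U (fun i => f i + g i).
Proof. apply mk_eq. apply (U_mono2 _ _ _ (rep_mk f) (rep_mk g)). congruence. Qed.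

Lemma smul_mk f g : smul U (mk U f) (mk U g) = mk U (fun i => f i * g i).
Proof. apply mk_eq. apply (U_mono2 _ _ _ (rep_mk f) (rep_mk g)). congruence. Qed.

Lemma sopp_mk f : sopp U (mk U f) = mk U (fun i => - f i).
Proof. apply mk_eq. apply (U_mono _ _ (rep_mk f)). congruence. Qed.

Lemma inStarN_mk f : inStarN U (mk U f) <-> U (fun i => 0 <= f i).
Proof.
  unfold inStarN. split; intros H; apply (U_mono2 _ _ _ H (rep_mk f)); lia.
Qed.

Lemma sdvd_mk f g : sdvd U (mk U f) (mk U g) <-> U (fun i => (f i | g i)).
Proof.
  split.
  - intros [z Hz]. destruct (mk_surj z) as [h ->]. rewrite smul_mk in Hz.
    apply mk_eq in Hz. apply (U_mono _ _ Hz). intros i E. exists (h i). auto.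
  - intros H. exists (mk U (fun i => g i / f i)). rewrite smul_mk. apply mk_eq.
    apply (U_mono _ _ H). intros i [c ->].
    destruct (Z.eq_dec (f i) 0) as [->|E]; [ring|].
    rewrite Z.div_mul by exact E. reflexivity.
Qed.

Ltac destruct_starZ := repeat match goal with x : starZ U |- _ =>
  let f := fresh "f" in destruct (mk_surj x) as [f ->] end.

Ltac starZ_ring := destruct_starZ; unfold szero, sone;
  repeat rewrite ?sadd_mk, ?smul_mk; apply mk_eq, U_all; intros; ring.

Lemma smul_comm x y : smul U x y = smul U y x.
Proof. starZ_ring. Qed.

Lemma sdvd_refl x : sdvd U x x.
Proof. exists (sone U). starZ_ring. Qed.

Lemma sdvd_trans x y z : sdvd U x y -> sdvd U y z -> sdvd U x z.
Proof. intros [a ->] [b ->]. exists (smul U b a). starZ_ring. Qed.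

Lemma sdvd_add d x y : sdvd U d x -> sdvd U d y -> sdvd U d (sadd U x y).
Proof. intros [a ->] [b ->]. exists (sadd U a b). starZ_ring. Qed.

Lemma sdvd_mul_l d r y : sdvd U d y -> sdvd U d (smul U r y).
Proof. intros [a ->]. exists (smul U r a). starZ_ring. Qed.

Lemma sdvd_mul_r d r y : sdvd U d y -> sdvd U d (smul U y r).
Proof. intros [a ->]. exists (smul U a r). starZ_ring. Qed.

Lemma sdvd_zero d : sdvd U d (szero U).
Proof. exists (szero U). starZ_ring. Qed.

Lemma szero_not_sdvd_one : ~ sdvd U (szero U) (sone U).
Proof.
  unfold szero, sone. rewrite sdvd_mk. intros H. destruct (U_nonempty _ H) as [i Hi].
  apply Z.divide_0_l in Hi. lia.
Qed.

Lemma sbezout x y : exists g u v,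
  sdvd U g x /\ sdvd U g y /\ g = sadd U (smul U u x) (smul U v y).
Proof.
  destruct_starZ. rename f into fy, f0 into fx.
  destruct (choice (fun i (uv : Z * Z) => fst uv * fx i + snd uv * fy i = Z.gcd (fx i) (fy i)))
    as [uv Huv].
  { intros i. destruct (Z.gcd_bezout (fx i) (fy i) _ eq_refl) as [u [v E]].
    exists (u, v). exact E. }
  exists (mk U (fun i => Z.gcd (fx i) (fy i))),
    (mk U (fun i => fst (uv i))), (mk U (fun i => snd (uv i))).
  split; [|split].
  - apply sdvd_mk, U_all. intros; apply Z.gcd_divide_l.
  - apply sdvd_mk, U_all. intros; apply Z.gcd_divide_r.
  - rewrite !smul_mk, sadd_mk. apply mk_eq, U_all. intros i. symmetry. apply Huv.
Qed.

Lemma mk_sprime f : U (fun i => prime (f i)) -> sprime U (mk U f).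
Proof.
  intros H. split; [|split].
  - apply inStarN_mk. apply (U_mono _ _ H). intros i Hp. apply prime_ge_2 in Hp. lia.
  - unfold sone. rewrite mk_eq. intros E. destruct (U_nonempty _ (U_and _ _ H E)) as [i [Hp Ei]].
    apply prime_ge_2 in Hp. unfold eqU in Ei. lia.
  - intros d Hd. destruct (mk_surj d) as [g ->]. apply sdvd_mk in Hd.
    assert (Hor : U (fun i => (g i = 1 \/ g i = -1) \/ (g i = f i \/ g i = - f i))).
    { apply (U_mono2 _ _ _ H Hd). intros i Hp Hdi.
      destruct (prime_divisors _ Hp _ Hdi) as [?|[?|[?|?]]]; tauto. }
    unfold sone. rewrite !sopp_mk, !mk_eq.
    apply U_or in Hor as [Ho|Ho]; apply U_or in Ho as [Ho|Ho]; tauto.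
Qed.

Lemma sprime_not_sdvd_one p : sprime U p -> ~ sdvd U p (sone U).
Proof.
  destruct_starZ. intros [HN [H1 _]] Hd. rewrite inStarN_mk in HN. unfold sone in *.
  apply sdvd_mk in Hd. apply H1, mk_eq. apply (U_mono2 _ _ _ HN Hd).
  intros i. apply Z.divide_1_r_nonneg.
Qed.

Lemma pr_sdvd_one x p : sdvd U x (sone U) -> ~ pr U x p.
Proof. intros Hx [Hp Hd]. apply (sprime_not_sdvd_one p Hp). eapply sdvd_trans; eauto. Qed.

Lemma not_sdvd_one_pr x : ~ sdvd U x (sone U) -> exists p, pr U x p.
Proof.
  intros Hx. destruct_starZ. unfold sone in Hx. rewrite sdvd_mk in Hx. apply U_compl in Hx.
  destruct (choice (fun i p => prime p /\ (~ (f i | 1) -> (p | f i)))) as [p Hp].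
  { intros i. destruct (classic (f i | 1)) as [E|E].
    - exists 2. split; [exact prime_2|tauto].
    - destruct (Z_exists_prime_divisor _ E) as [p [? ?]]. exists p; auto. }
  exists (mk U p). split.
  - apply mk_sprime, U_all. intros i. apply Hp.
  - apply sdvd_mk. apply (U_mono _ _ Hx). intros i. apply Hp.
Qed.

Lemma pr_meet a b : exists g u v,
  pr U g = (fun q => pr U a q /\ pr U b q) /\ g = sadd U (smul U u a) (smul U v b).
Proof.
  destruct (sbezout a b) as [g [u [v [Hga [Hgb Eg]]]]]. exists g, u, v. split; [|exact Eg].
  apply pred_ext. intros q. split.
  - intros [Hq Hqg]. split; split; auto; eapply sdvd_trans; eauto.
  - intros [[Hq Hqa] [_ Hqb]]. split; [exact Hq|]. rewrite Eg.
    apply sdvd_add; apply sdvd_mul_l; assumption.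
Qed.

Lemma pr_disjoint_bezout a b : (forall q, ~ (pr U a q /\ pr U b q)) ->
  exists u v, sone U = sadd U (smul U u a) (smul U v b).
Proof.
  intros Hdis. destruct (pr_meet a b) as [g [u [v [Eg Hg]]]].
  destruct (classic (sdvd U g (sone U))) as [[z Hz]|Hu].
  - exists (smul U z u), (smul U z v). rewrite Hz, Hg. starZ_ring.
  - destruct (not_sdvd_one_pr g Hu) as [q Hq]. rewrite Eg in Hq. destruct (Hdis q Hq).
Qed.

Lemma ideal_lin_comb J x y a b :
  is_ideal U J -> J x -> J y -> J (sadd U (smul U a x) (smul U b y)).
Proof. intros [_ [HA HM]] Hx Hy. apply HA; apply HM; assumption. Qed.

Lemma ideal_sone J u : is_ideal U J -> J u -> sdvd U u (sone U) -> J (sone U).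
Proof. intros [_ [_ HM]] Hu [z ->]. apply HM, Hu. Qed.

Lemma maximal_ideal_not_sdvd_one m n : maximal_ideal U m -> m n -> ~ sdvd U n (sone U).
Proof. intros [Hm [H1 _]] Hn Hu. exact (H1 (ideal_sone m n Hm Hn Hu)). Qed.

Lemma maximal_ideal_bezout m k : maximal_ideal U m -> ~ m k ->
  exists a r, m a /\ sone U = sadd U a (smul U r k).
Proof.
  intros [Hm [H1 Hmax]] Hk.
  set (K := fun x => exists a r, m a /\ x = sadd U a (smul U r k)).
  assert (HK : is_ideal U K).
  { destruct Hm as [H0 [HA HM]]. split; [|split].
    - exists (szero U), (szero U). split; [exact H0|]. starZ_ring.
    - intros x y [a [r [Ha ->]]] [a' [r' [Ha' ->]]].
      exists (sadd U a a'), (sadd U r r'). split; [auto|]. starZ_ring.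
    - intros s x [a [r [Ha ->]]]. exists (smul U s a), (smul U s r). split; [auto|].
      starZ_ring. }
  destruct (Hmax K HK) as [E|E].
  - intros x Hx. exists x, (szero U). split; [exact Hx|]. starZ_ring.
  - exfalso. apply Hk. rewrite <- E. exists (szero U), (sone U).
    split; [apply Hm|]. starZ_ring.
  - exact E.
Qed.

Lemma maximal_ideal_pr_disjoint m k : maximal_ideal U m -> ~ m k ->
  exists a, m a /\ forall q, ~ (pr U a q /\ pr U k q).
Proof.
  intros Hm Hk. destruct (maximal_ideal_bezout m k Hm Hk) as [a [r [Ha E]]].
  exists a. split; [exact Ha|]. intros q [[Hq Hqa] [_ Hqk]].
  apply (sprime_not_sdvd_one q Hq). rewrite E. apply sdvd_add; [|apply sdvd_mul_l]; assumption.
Qed.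

(* If k were outside m, some a in m would share no prime with k; but gcd(n, a)
   lies in m, so it is a nonunit and has a prime divisor, which then divides k. *)
Lemma maximal_ideal_pr_closed m n k :
  maximal_ideal U m -> m n -> subset U (pr U n) (pr U k) -> m k.
Proof.
  intros Hm Hn Hs. apply NNPP. intros Hk.
  destruct (maximal_ideal_pr_disjoint m k Hm Hk) as [a [Ha Hdis]].
  destruct (pr_meet n a) as [g [u [v [Eg Hg]]]].
  assert (Hgm : m g) by (rewrite Hg; apply ideal_lin_comb; auto; apply Hm).
  destruct (not_sdvd_one_pr g (maximal_ideal_not_sdvd_one m g Hm Hgm)) as [q Hq].
  rewrite Eg in Hq. destruct Hq as [Hqn Hqa]. exact (Hdis q (conj Hqa (Hs q Hqn))).
Qed.

Lemma Fof_pr m n : maximal_ideal U m -> Fof U m (pr U n) <-> m n.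
Proof.
  intros Hm. split.
  - intros [k [Hk E]]. apply (maximal_ideal_pr_closed m k n Hm Hk). rewrite E. intros q; auto.
  - intros Hn. exists n. split; [exact Hn|reflexivity].
Qed.

Lemma Fof_is_filter m : maximal_ideal U m -> is_filter U (Fof U m).
Proof.
  intros Hm. split; [|split; [|split]].
  - intros S [n [_ ->]]. exists n. reflexivity.
  - intros [n [Hn E]].
    destruct (not_sdvd_one_pr n (maximal_ideal_not_sdvd_one m n Hm Hn)) as [p Hp].
    rewrite <- E in Hp. exact Hp.
  - intros S T [a [Ha ->]] [b [Hb ->]]. destruct (pr_meet a b) as [g [u [v [Eg Hg]]]].
    exists g. split; [|symmetry; exact Eg]. rewrite Hg. apply ideal_lin_comb; auto. apply Hm.
  - intros n k Hn Hs. apply (Fof_pr m k Hm).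
    apply (maximal_ideal_pr_closed m n k Hm); [apply (Fof_pr m n Hm), Hn|exact Hs].
Qed.

Lemma Fof_maximal_filter m : maximal_ideal U m -> maximal_filter U (Fof U m).
Proof.
  intros Hm. split; [exact (Fof_is_filter m Hm)|]. intros [G [HG [Hsub Hne]]].
  apply Hne, pred_ext. intros S. split; [|apply Hsub]. intros HS.
  destruct (proj1 HG S HS) as [k ->]. apply (Fof_pr m k Hm), NNPP. intros Hk.
  destruct (maximal_ideal_pr_disjoint m k Hm Hk) as [a [Ha Hdis]].
  apply (proj1 (proj2 HG)).
  replace (fun _ : starZ U => False) with (fun q => pr U a q /\ pr U k q)
    by (apply pred_ext; intros q; split; [apply Hdis|tauto]).
  apply (proj1 (proj2 (proj2 HG))); [apply Hsub; exists a; auto|exact HS].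
Qed.

Lemma Fof_inj m1 m2 : maximal_ideal U m1 -> maximal_ideal U m2 ->
  Fof U m1 = Fof U m2 -> m1 = m2.
Proof.
  intros H1 H2 E. apply pred_ext. intros x.
  rewrite <- (Fof_pr m1 x H1), <- (Fof_pr m2 x H2), E. reflexivity.
Qed.

Lemma Fof_principal_iff m : maximal_ideal U m ->
  (principal_filter U (Fof U m) <-> exists p, sprime U p /\ m = pZ U p).
Proof.
  intros Hm. split.
  - intros [n Hn].
    assert (HFsub : forall k, m k -> subset U (pr U n) (pr U k)).
    { intros k Hk. apply Hn; [exists k; reflexivity|]. apply (Fof_pr m k Hm), Hk. }
    assert (Hnm : m n).
    { apply (Fof_pr m n Hm), Hn; [exists n; reflexivity|intros q; auto]. }
    destruct (not_sdvd_one_pr n (maximal_ideal_not_sdvd_one m n Hm Hnm)) as [p Hpn].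
    assert (Hpm : m p).
    { apply NNPP. intros Hp. destruct (maximal_ideal_pr_disjoint m p Hm Hp) as [a [Ha Hdis]].
      apply (Hdis p). split; [exact (HFsub a Ha p Hpn)|split; [apply Hpn|apply sdvd_refl]]. }
    exists p. split; [apply Hpn|]. apply pred_ext. intros x. split.
    + intros Hx. destruct (HFsub x Hx p Hpn) as [_ [z ->]]. exists z. apply smul_comm.
    + intros [z ->]. rewrite smul_comm. apply Hm, Hpm.
  - intros [p [Hp ->]]. exists p. intros S [k ->]. split.
    + intros [k' [[z ->] Ek]]. rewrite Ek. intros q [Hq Hqp]. split; [exact Hq|].
      apply (sdvd_trans _ _ _ Hqp), sdvd_mul_r, sdvd_refl.
    + intros Hs. destruct (Hs p (conj Hp (sdvd_refl p))) as [_ [z ->]].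
      exists (smul U z p). split; [|reflexivity]. exists z. apply smul_comm.
Qed.

Lemma pr_sone : pr U (sone U) = (fun _ => False).
Proof. apply pred_ext. intros q. split; [apply pr_sdvd_one, sdvd_refl|tauto]. Qed.

Lemma pr_sub_pr_szero n : subset U (pr U n) (pr U (szero U)).
Proof. intros q [Hq _]. split; [exact Hq|apply sdvd_zero]. Qed.

Lemma maximal_filter_eq F G :
  maximal_filter U F -> is_filter U G -> (forall S, F S -> G S) -> G = F.
Proof. intros [_ Hmax] HG Hsub. apply NNPP. intros Hne. apply Hmax. exists G. auto. Qed.

(* pr 0 is the set of all primes, the top of pr( *Z ); otherwise F is empty and
   lies strictly below the filter {pr 0}. *)
Lemma maximal_filter_pr_szero F : maximal_filter U F -> F (pr U (szero U)).
Proof.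
  intros HF. destruct (proj1 HF) as [Hin [_ [_ Hup]]].
  apply NNPP. intros H0.
  assert (Htop : is_filter U (fun S => S = pr U (szero U))).
  { split; [|split; [|split]].
    - intros S ->. exists (szero U). reflexivity.
    - intros E. destruct (not_sdvd_one_pr _ szero_not_sdvd_one) as [p Hp].
      rewrite <- E in Hp. exact Hp.
    - intros S T -> ->. apply pred_ext. tauto.
    - intros n k E Hs. apply pred_ext. intros q. split; [apply pr_sub_pr_szero|].
      intros Hq. apply Hs. rewrite E. exact Hq. }
  assert (Hempty : forall S, ~ F S).
  { intros S HS. apply H0. destruct (Hin S HS) as [n ->].
    exact (Hup n _ HS (pr_sub_pr_szero n)). }
  apply H0. rewrite <- (maximal_filter_eq F _ HF Htop); [reflexivity|].
  intros S HS. destruct (Hempty S HS).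
Qed.

Lemma filter_pr_ideal F : is_filter U F -> F (pr U (szero U)) -> is_ideal U (fun n => F (pr U n)).
Proof.
  intros [_ [_ [Hint Hup]]] H0. split; [exact H0|split].
  - intros x y Hx Hy. destruct (pr_meet x y) as [g [u [v [Eg _]]]].
    apply (Hup g); [rewrite Eg; apply Hint; assumption|].
    intros q Hq. rewrite Eg in Hq. destruct Hq as [[Hq Hqx] [_ Hqy]].
    split; [exact Hq|apply sdvd_add; assumption].
  - intros r x Hx. apply (Hup x _ Hx). intros q [Hq Hqx].
    split; [exact Hq|apply sdvd_mul_l, Hqx].
Qed.

Definition filter_meet_pr (F : (starZ U -> Prop) -> Prop) (x : starZ U) :
  (starZ U -> Prop) -> Prop :=
  fun S => in_prZ U S /\ exists a, F (pr U a) /\ subset U (fun q => pr U a q /\ pr U x q) S.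

Lemma filter_meet_pr_is_filter F x : is_filter U F ->
  (forall a, F (pr U a) -> exists q, pr U a q /\ pr U x q) -> is_filter U (filter_meet_pr F x).
Proof.
  intros [_ [_ [Hint _]]] Hmeet. split; [|split; [|split]].
  - intros S [HS _]. exact HS.
  - intros [_ [a [Fa Hs]]]. destruct (Hmeet a Fa) as [q Hq]. exact (Hs q Hq).
  - intros S T [[s ->] [a [Fa Ha]]] [[t ->] [b [Fb Hb]]].
    destruct (pr_meet s t) as [g [_ [_ [Eg _]]]]. destruct (pr_meet a b) as [h [_ [_ [Eh _]]]].
    split; [exists g; symmetry; exact Eg|]. exists h. split.
    + rewrite Eh. apply Hint; assumption.
    + intros q [Hqh Hqx]. rewrite Eh in Hqh. destruct Hqh as [Hqa Hqb].
      split; [apply Ha|apply Hb]; split; assumption.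
  - intros n k [_ [a [Fa Ha]]] Hs. split; [exists k; reflexivity|].
    exists a. split; [exact Fa|]. intros q Hq. apply Hs, Ha, Hq.
Qed.

Lemma maximal_filter_pr_disjoint F x : maximal_filter U F -> ~ F (pr U x) ->
  exists a, F (pr U a) /\ forall q, ~ (pr U a q /\ pr U x q).
Proof.
  intros HF Hx. destruct (proj1 HF) as [Hin _].
  apply NNPP. intros Hno. apply Hx.
  assert (Hmeet : forall a, F (pr U a) -> exists q, pr U a q /\ pr U x q).
  { intros a Fa. apply NNPP. intros Hq. apply Hno. exists a. split; [exact Fa|].
    intros q Hqa. apply Hq. exists q. exact Hqa. }
  rewrite <- (maximal_filter_eq F _ HF (filter_meet_pr_is_filter F x (proj1 HF) Hmeet)).
  - split; [exists x; reflexivity|]. exists (szero U).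
    split; [apply maximal_filter_pr_szero, HF|]. intros q [_ Hq]. exact Hq.
  - intros S HS. split; [exact (Hin S HS)|]. destruct (Hin S HS) as [s ->].
    exists s. split; [exact HS|]. intros q [Hq _]. exact Hq.
Qed.

Lemma maximal_filter_pr_ideal F : maximal_filter U F -> maximal_ideal U (fun n => F (pr U n)).
Proof.
  intros HF. pose proof (proj1 HF) as [Hin [Hemp _]].
  pose proof (filter_pr_ideal F (proj1 HF) (maximal_filter_pr_szero F HF)) as Hid.
  split; [exact Hid|split].
  - rewrite pr_sone. exact Hemp.
  - intros K HK Hsub. destruct (classic (exists x, K x /\ ~ F (pr U x))) as [[x [Kx Hx]]|Hno].
    + right. destruct (maximal_filter_pr_disjoint F x HF Hx) as [a [Fa Hdis]].
      destruct (pr_disjoint_bezout a x Hdis) as [u [v ->]].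
      apply ideal_lin_comb; [exact HK|apply Hsub, Fa|exact Kx].
    + left. apply pred_ext. intros x. split; [|apply Hsub].
      intros Kx. apply NNPP. intros Hx. apply Hno. exists x. auto.
Qed.

Lemma Fof_surj F : maximal_filter U F -> exists m, maximal_ideal U m /\ Fof U m = F.
Proof.
  intros HF. exists (fun n => F (pr U n)). split; [apply maximal_filter_pr_ideal, HF|].
  apply pred_ext. intros S. split.
  - intros [n [Hn ->]]. exact Hn.
  - intros HS. destruct (proj1 (proj1 HF) S HS) as [n ->]. exists n. auto.
Qed.

End Ultrapower.

Theorem theorem4p6 (I : Type) (U : (I -> Prop) -> Prop)
  (hI : countably_infinite I) (hU : ultrafilter U) (hUnp : nonprincipal U) :
  (* m |-> F(m) maps maximal ideals to maximal filters ... *)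
  (forall m, maximal_ideal U m -> maximal_filter U (Fof U m)) /\
  (* ... injectively ... *)
  (forall m1 m2, maximal_ideal U m1 -> maximal_ideal U m2 ->
     Fof U m1 = Fof U m2 -> m1 = m2) /\
  (* ... and onto the maximal filters *)
  (forall F, maximal_filter U F -> exists m, maximal_ideal U m /\ Fof U m = F) /\
  (* F(m) principal iff m = p *Z with p in P( *N ) *)
  (forall m, maximal_ideal U m ->
     (principal_filter U (Fof U m) <-> exists p, sprime U p /\ m = pZ U p)).
Proof.
  split; [|split; [|split]].
  - exact (Fof_maximal_filter I U hU).
  - exact (Fof_inj I U hU).
  - exact (Fof_surj I U hU).
  - exact (Fof_principal_iff I U hU).
Qed.
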